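(* For all integers $n\ge 1$, $c\ge 0$ and $k$, $$\left\langle {n \atop k}\right\rangle_{\!c}=\left\langle {n \atop c(n-1)-k}\right\rangle_{\!c}.$$
   Context: A $c$-rook placement on an $n\times n$ board is a placement of $cn$ rooks on the cells, several rooks being allowed in the same cell, such that every row and every column contains exactly $c$ rooks (equivalently, an $n\times n$ matrix of nonnegative integers with all row and column sums equal to $c$). A drop is a rook lying strictly below the main diagonal, i.e.\ in a cell $(i,j)$ (row $i$, column $j$) with $i>j$, counted with multiplicity. The generalized Eulerian number $\left\langle {n \atop k}\right\rangle_{\!c}$ is the number of $c$-rook placements on the $n\times n$ board with exactly $k$ drops (this is $0$ if $k<0$). *)

From HB Require Import structures.
From mathcomp Require Import all_boot all_order all_algebra.
Set Implicit Arguments. Unset Strict Implicit. Unset Printing Implicit Defensive.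
Import GRing.Theory Num.Theory.

(* A c-rook placement on the n x n board: an n x n matrix of nonnegative
   integers with all row and column sums equal to c.  Every entry of such a
   matrix is at most c, so we represent entries in 'I_c.+1 (values 0..c);
   this loses no placements and makes the set of placements finite. *)
Definition rook_placement (n c : nat) (A : 'M['I_c.+1]_n) : bool :=
  [forall i : 'I_n, \sum_(j < n) (A i j : nat) == c] &&
  [forall j : 'I_n, \sum_(i < n) (A i j : nat) == c].

Definition drops (n c : nat) (A : 'M['I_c.+1]_n) : nat :=
  \sum_(i < n) \sum_(j < n | j < i) (A i j : nat).

(* Generalized Eulerian number <n, k>_c, for an integer k
   (automatically 0 for k < 0). *)
Definition geuler (n c : nat) (k : int) : nat :=
  #|[set A : 'M['I_c.+1]_n | rook_placement A & (Posz (drops A) == k)]|.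

From mathcomp Require Import all_boot all_order all_algebra.
From mathcomp Require Import zify.
Import GRing.Theory Num.Theory.

Set Implicit Arguments.
Unset Strict Implicit.
Unset Printing Implicit Defensive.

(* The map A |-> B with B i j = A j (i - 1 mod n) (transpose, then shift the
   rows cyclically down by one) is an injection from c-rook placements to
   c-rook placements.  Its drops are the rooks of A on or above the diagonal,
   except those of the last column, which wrap around to row 0; as the last
   column holds c rooks, drops B + drops A + c = c n.  Hence <n, k>_c is at
   most <n, c(n-1) - k>_c, and the reverse inequality is the same statement
   applied to c(n-1) - k. *)

Section PlacementSums.
Variables (n c : nat).
Implicit Type A : 'M['I_c.+1]_n.

Definition upper_weight A : nat := \sum_(i < n) \sum_(j < n | i <= j) (A i j : nat).

Lemma drops_add_upper_weight A :
  (drops A + upper_weight A = \sum_(i < n) \sum_(j < n) (A i j : nat))%N.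
Proof.
rewrite /drops /upper_weight -big_split /=; apply: eq_bigr => i _.
rewrite [RHS](bigID (fun j : 'I_n => j < i)).
by under [X in (_ + X)%N = _]eq_bigl do rewrite leqNgt.
Qed.

Lemma sum_rook_placement A :
  rook_placement A -> \sum_(i < n) \sum_(j < n) (A i j : nat) = (c * n)%N.
Proof.
case/andP=> /forallP rows _.
under eq_bigr do rewrite (eqP (rows _)).
by rewrite sum_nat_const card_ord mulnC.
Qed.

Lemma rook_placement_tr A : rook_placement A^T%R = rook_placement A.
Proof.
rewrite /rook_placement andbC.
by congr (_ && _); apply: eq_forallb => i; under eq_bigr do rewrite mxE.
Qed.

Lemma rook_placement_reindex_rows (f : 'I_n -> 'I_n) A :
  injective f -> rook_placement (\matrix_(i, j) A (f i) j) = rook_placement A.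
Proof.
move=> injf; have [g _ gK] := injF_bij injf.
set B := (X in rook_placement X).
have rowB i : \sum_(j < n) (B i j : nat) = \sum_(j < n) (A (f i) j : nat).
  by apply: eq_bigr => j _; rewrite mxE.
have colB j : \sum_(i < n) (B i j : nat) = \sum_(i < n) (A i j : nat).
  by rewrite [RHS](reindex_inj injf); apply: eq_bigr => i _; rewrite mxE.
rewrite /rook_placement; congr (_ && _); last by apply: eq_forallb => j; rewrite colB.
apply/forallP/forallP => sums i; first by rewrite -[i]gK -rowB.
by rewrite rowB.
Qed.

End PlacementSums.

Section ShiftTranspose.
Variables (n c : nat).
Implicit Type A : 'M['I_c.+1]_n.+1.

Definition shift_tr A : 'M['I_c.+1]_n.+1 := (\matrix_(i, j) A^T (ord_pred i) j)%R.

Lemma shift_tr_inj : injective shift_tr.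
Proof.
move=> A B /matrixP eqAB; apply/matrixP=> i j.
by have := eqAB (ordS j) i; rewrite !mxE ordSK.
Qed.

Lemma rook_placement_shift_tr A : rook_placement (shift_tr A) = rook_placement A.
Proof. by rewrite rook_placement_reindex_rows ?rook_placement_tr //; apply: ord_pred_inj. Qed.

Lemma ltn_ordS (i j : 'I_n.+1) : (i < ordS j) = (i <= j) && (j != ord_max).
Proof.
rewrite -val_eqE /=; case: i j => [i ltin] [j ltjn] /=.
have [-> | ltjn'] := eqVneq j n; first by rewrite modnn andbF.
rewrite modn_small; lia.
Qed.

Lemma drops_shift_tr A :
  (drops (shift_tr A) + \sum_(i < n.+1) (A i ord_max : nat) = upper_weight A)%N.
Proof.
rewrite /drops /upper_weight.
under eq_bigr do under eq_bigr do rewrite !mxE.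
rewrite (exchange_big_dep xpredT) //= -big_split /=; apply: eq_bigr => i _.
rewrite (reindex_inj (@ordS_inj _)) /=.
under eq_bigr do rewrite ordSK.
rewrite [RHS](bigD1 ord_max) ?leq_ord //= addnC.
by congr (_ + _)%N; apply: eq_bigl => j; rewrite ltn_ordS.
Qed.

Lemma drops_shift_tr_complement A : rook_placement A ->
  (drops (shift_tr A) + drops A + c = c * n.+1)%N.
Proof.
move=> rpA; have /andP[_ /forallP cols] := rpA.
rewrite -(sum_rook_placement rpA) -drops_add_upper_weight -drops_shift_tr.
by rewrite (eqP (cols ord_max)) addnAC addnC.
Qed.

End ShiftTranspose.

Local Open Scope ring_scope.

Lemma geuler_le_complement (n c : nat) (k : int) :
  (geuler n.+1 c k <= geuler n.+1 c ((c * n)%N%:Z - k))%N.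
Proof.
rewrite /geuler -(card_imset _ (@shift_tr_inj n c)).
apply: subset_leq_card; apply/subsetP=> B /imsetP[A].
rewrite inE => /andP[rpA /eqP dA] ->.
rewrite inE rook_placement_shift_tr rpA /=; apply/eqP.
have := drops_shift_tr_complement rpA; rewrite -dA mulnS.
lia.
Qed.

Theorem theorem4p1 (n c : nat) (k : int) :
  (1 <= n)%N ->
  geuler n c k = geuler n c ((c * (n - 1))%N%:Z - k).
Proof.
case: n => // n _; rewrite subn1 /=.
apply/eqP; rewrite eqn_leq geuler_le_complement /=.
by rewrite -[X in (_ <= geuler _ _ X)%N](subKr (c * n)%N%:Z) geuler_le_complement.
Qed.
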